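(* There is an absolute constant $C>0$ such that for every integer $n\ge 5$ with $n\equiv 1\pmod 4$ there is a dissection $D_n$ of the unit square $[0,1]^2$ into $n$ triangles with $\mathcal{R}(D_n)\le C/n^5$. Moreover $D_n$ can be taken of the following type: one triangle with vertices $(0,1),(1,1),(1,1-2/n)$ (area $1/n$), and the remaining region below the segment from $(0,1)$ to $(1,1-2/n)$ cut by $\tfrac{n-1}{4}$ vertical segments into trapezoidal slices (each with two vertical sides, bottom on the $x$-axis and top on that segment), each slice being divided into four triangles $T_1,T_2,T_3,T_4$ as follows: with the slice's bottom-left, bottom-right, top-right, top-left corners $A,B,Q,S$ and an extra point $M$ on the bottom side $AB$, $T_1=ASM$, $T_2=SM\,U$, $T_3=MUQ$, $T_4=MBQ$, where $U$ is an extra point on the top side $SQ$.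
   Context: A dissection of a polygon is a finite set of nondegenerate triangles with disjoint interiors whose union is the polygon. If its triangles have areas $a_1,\dots,a_n$, the range is $\mathcal{R}(D)=\max_{i,j}|a_i-a_j|$. *)

From Stdlib Require Import Reals Lra Lia List Permutation.
Import ListNotations.
Open Scope R_scope.

Definition point : Type := (R * R)%type.
Definition tri : Type := (point * point * point)%type.

Definition px (p : point) : R := fst p.
Definition py (p : point) : R := snd p.

Definition signed_area (T : tri) : R :=
  let '(a, b, c) := T in
  ((px b - px a) * (py c - py a) - (px c - px a) * (py b - py a)) / 2.
Definition area (T : tri) : R := Rabs (signed_area T).

Definition nondegenerate (T : tri) : Prop := signed_area T <> 0.

Definition in_triangle (T : tri) (p : point) : Prop :=
  let '(a, b, c) := T in
  exists l1 l2 l3 : R, 0 <= l1 /\ 0 <= l2 /\ 0 <= l3 /\ l1 + l2 + l3 = 1 /\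
    px p = l1 * px a + l2 * px b + l3 * px c /\
    py p = l1 * py a + l2 * py b + l3 * py c.

Definition in_interior (T : tri) (p : point) : Prop :=
  exists eps : R, 0 < eps /\
    forall q : point, (px q - px p) ^ 2 + (py q - py p) ^ 2 < eps ^ 2 ->
      in_triangle T q.

Definition in_unit_square (p : point) : Prop :=
  0 <= px p <= 1 /\ 0 <= py p <= 1.

Definition is_dissection_of_unit_square (D : list tri) : Prop :=
  (forall T, In T D -> nondegenerate T) /\
  (forall i j : nat, (i < length D)%nat -> (j < length D)%nat -> i <> j ->
     forall p : point,
       ~ (in_interior (nth i D ((0,0),(0,0),(0,0))) p /\
          in_interior (nth j D ((0,0),(0,0),(0,0))) p)) /\
  (forall p : point, in_unit_square p <-> exists T, In T D /\ in_triangle T p).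

Definition range (D : list tri) : R :=
  fold_right Rmax 0
    (map (fun T1 => fold_right Rmax 0
            (map (fun T2 => Rabs (area T1 - area T2)) D)) D).

Definition top_y (n : nat) (x : R) : R := 1 - 2 * x / INR n.

Definition top_triangle (n : nat) : tri :=
  ((0, 1), (1, 1), (1, 1 - 2 / INR n)).

Definition slice_triangles (n : nat) (a b m u : R) : list tri :=
  let A : point := (a, 0) in
  let B : point := (b, 0) in
  let Q : point := (b, top_y n b) in
  let S : point := (a, top_y n a) in
  let M : point := (m, 0) in
  let U : point := (u, top_y n u) in
  [ (A, S, M); (S, M, U); (M, U, Q); (M, B, Q) ].

Definition special_type (n : nat) (D : list tri) : Prop :=
  let k := ((n - 1) / 4)%nat in
  exists (x m u : nat -> R),
    x 0%nat = 0 /\ x k = 1 /\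
    (forall i : nat, (1 <= i <= k)%nat ->
       x (i - 1)%nat < x i /\
       x (i - 1)%nat <= m i <= x i /\
       x (i - 1)%nat <= u i <= x i) /\
    Permutation D
      (top_triangle n ::
         flat_map (fun i => slice_triangles n (x (i - 1)%nat) (x i) (m i) (u i))
                  (seq 1 k)).

(* Cut [0,1] at the points x_i with x_i - x_i^2/n = 4i/n, so that every trapezoidal slice
   under the segment has area exactly 4/n.  In the slice over [a,b], place M so that ASM
   has area 1/n, then U so that SMU has area 1/n; the remaining triangles MUQ and MBQ
   share the area 2/n and deviate from 1/n by (b-a)^3/(2 n^2 h), where h >= 3/5 is the
   height of the slice at a and b - a = O(1/n); this is O(1/n^5).  Interiors are disjoint because any two triangles
   are separated by a line, and the square is covered by locating each point through
   orientation tests. *)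

From Stdlib Require Import Reals List Lra Lia Psatz Permutation.
Open Scope R_scope.

Definition sarea (a b c : point) : R := signed_area (a, b, c).

Lemma sarea_E (a b c : point) : sarea a b c =
  ((px b - px a) * (py c - py a) - (px c - px a) * (py b - py a)) / 2.
Proof. reflexivity. Qed.

Lemma sarea_cycle a b c : sarea a b c = sarea b c a.
Proof. rewrite !sarea_E. field. Qed.

Lemma sarea_degen_l a b : sarea a b a = 0.
Proof. rewrite sarea_E. field. Qed.

Lemma sarea_degen_r a b : sarea a b b = 0.
Proof. rewrite sarea_E. field. Qed.

Lemma in_triangle_sarea (a b c p : point) : sarea a b c <> 0 ->
  0 <= sarea p b c / sarea a b c -> 0 <= sarea a p c / sarea a b c ->
  0 <= sarea a b p / sarea a b c -> in_triangle (a, b, c) p.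
Proof.
  intros H0 H1 H2 H3.
  exists (sarea p b c / sarea a b c), (sarea a p c / sarea a b c),
    (sarea a b p / sarea a b c).
  rewrite !sarea_E in *; repeat split; auto; field; intro; apply H0; lra.
Qed.

Lemma in_triangle_pos (a b c p : point) : 0 < sarea a b c ->
  0 <= sarea p b c -> 0 <= sarea a p c -> 0 <= sarea a b p ->
  in_triangle (a, b, c) p.
Proof. intros; apply in_triangle_sarea; try lra; apply Rle_mult_inv_pos; lra. Qed.

Lemma in_triangle_neg (a b c p : point) : sarea a b c < 0 ->
  sarea p b c <= 0 -> sarea a p c <= 0 -> sarea a b p <= 0 ->
  in_triangle (a, b, c) p.
Proof.
  intros Habc H1 H2 H3; apply in_triangle_sarea; try lra;
  match goal with |- 0 <= ?x / ?s =>
    replace (x / s) with (- x / - s) by (field; lra) end;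
  apply Rle_mult_inv_pos; lra.
Qed.

Definition affine (al be ga : R) (p : point) : R := al * px p + be * py p + ga.

Definition all_vertices (P : point -> Prop) (T : tri) : Prop :=
  let '(a, b, c) := T in P a /\ P b /\ P c.

Lemma affine_nonpos_triangle al be ga T q : in_triangle T q ->
  all_vertices (fun p => affine al be ga p <= 0) T -> affine al be ga q <= 0.
Proof.
  destruct T as [[a b] c].
  intros [l1 [l2 [l3 [H1 [H2 [H3 [Hsum [Hx Hy]]]]]]]] [Ha [Hb Hc]].
  assert (Hcomb : affine al be ga q =
    l1 * affine al be ga a + l2 * affine al be ga b + l3 * affine al be ga c).
  { unfold affine. rewrite Hx, Hy.
    replace ga with (ga * (l1 + l2 + l3)) at 1 by (rewrite Hsum; ring). ring. }
  rewrite Hcomb. nra.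
Qed.

(* Step from [p] a little along the gradient: the new point is still in [T]. *)
Lemma affine_neg_interior al be ga T p : (al <> 0 \/ be <> 0) ->
  all_vertices (fun p => affine al be ga p <= 0) T -> in_interior T p ->
  affine al be ga p < 0.
Proof.
  intros Hgrad HT [eps [Heps Hball]].
  set (g := al * al + be * be).
  assert (Hg : 0 < g) by (destruct Hgrad; unfold g; nra).
  set (t := eps / (2 * (g + 1))).
  assert (Ht : 0 < t) by (apply Rdiv_lt_0_compat; lra).
  assert (Heps_t : eps = t * (2 * (g + 1))) by (unfold t; field; lra).
  set (q := (px p + t * al, py p + t * be) : point).
  assert (Hq : in_triangle T q).
  { apply Hball. rewrite Heps_t.
    replace ((px q - px p) ^ 2 + (py q - py p) ^ 2) with (t * t * g)
      by (unfold q, g, px, py; simpl; ring).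
    assert (0 < t * t) by nra. nra. }
  pose proof (affine_nonpos_triangle al be ga T q Hq HT) as Haq.
  replace (affine al be ga q) with (affine al be ga p + t * g) in Haq
    by (unfold affine, q, g, px, py; simpl; ring).
  nra.
Qed.

Definition separated (T T' : tri) : Prop :=
  exists al be ga, (al <> 0 \/ be <> 0) /\
    all_vertices (fun p => affine al be ga p <= 0) T /\
    all_vertices (fun p => 0 <= affine al be ga p) T'.

Lemma separated_sym T T' : separated T T' -> separated T' T.
Proof.
  intros [al [be [ga [Hgrad [H1 H2]]]]]. exists (-al), (-be), (-ga).
  destruct T as [[a b] c], T' as [[a' b'] c']. simpl in *. unfold affine in *.
  split; [lra|]. split; lra.
Qed.

Lemma separated_interiors_disjoint T T' p :
  separated T T' -> ~ (in_interior T p /\ in_interior T' p).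
Proof.
  intros [al [be [ga [Hgrad [H1 H2]]]]] [HT HT'].
  pose proof (affine_neg_interior al be ga T p Hgrad H1 HT).
  assert (Hgrad' : -al <> 0 \/ -be <> 0) by lra.
  assert (H2' : all_vertices (fun p => affine (-al) (-be) (-ga) p <= 0) T').
  { destruct T' as [[a b] c]. simpl in *. unfold affine in *. lra. }
  pose proof (affine_neg_interior (-al) (-be) (-ga) T' p Hgrad' H2' HT').
  unfold affine in *. lra.
Qed.

Lemma separated_by_line (X Y : point) T T' : X <> Y ->
  all_vertices (fun p => sarea X Y p <= 0) T ->
  all_vertices (fun p => 0 <= sarea X Y p) T' -> separated T T'.
Proof.
  intros HXY H1 H2.
  exists (-(py Y - py X) / 2), ((px Y - px X) / 2),
    ((px X * py Y - px Y * py X) / 2).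
  assert (Haff : forall p, affine (-(py Y - py X) / 2) ((px Y - px X) / 2)
    ((px X * py Y - px Y * py X) / 2) p = sarea X Y p).
  { intros p. unfold affine. rewrite sarea_E. field. }
  split.
  - destruct X as [x1 y1], Y as [x2 y2]; unfold px, py; simpl.
    destruct (Req_dec x1 x2), (Req_dec y1 y2); subst; try tauto; lra.
  - destruct T as [[a b] c], T' as [[a' b'] c']. simpl in *. rewrite !Haff. tauto.
Qed.

Definition vertices_in_unit_square (T : tri) : Prop := all_vertices in_unit_square T.

Lemma in_unit_square_triangle T q :
  vertices_in_unit_square T -> in_triangle T q -> in_unit_square q.
Proof.
  intros HT Hq.
  assert (Hside : forall al be ga,
    (forall p, in_unit_square p -> affine al be ga p <= 0) -> affine al be ga q <= 0).
  { intros al be ga Hsq. apply (affine_nonpos_triangle al be ga T q Hq).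
    destruct T as [[a b] c]. destruct HT as [Ha [Hb Hc]]. simpl. auto. }
  unfold in_unit_square, affine in *.
  assert (-1 * px q + 0 * py q + 0 <= 0) by (apply Hside; intros; lra).
  assert (1 * px q + 0 * py q + -1 <= 0) by (apply Hside; intros; lra).
  assert (0 * px q + -1 * py q + 0 <= 0) by (apply Hside; intros; lra).
  assert (0 * px q + 1 * py q + -1 <= 0) by (apply Hside; intros; lra).
  lra.
Qed.

Lemma ForallOrdPairs_nth {A} (R0 : A -> A -> Prop) (l : list A) d :
  (forall x y, R0 x y -> R0 y x) -> ForallOrdPairs R0 l ->
  forall i j, (i < length l)%nat -> (j < length l)%nat -> i <> j ->
  R0 (nth i l d) (nth j l d).
Proof.
  intros Hsym Hl. induction Hl as [|a l Ha Hl IH]; intros i j Hi Hj Hij; simpl in *.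
  - lia.
  - rewrite Forall_forall in Ha.
    destruct i as [|i], j as [|j]; try lia.
    + apply Ha, nth_In. lia.
    + apply Hsym, Ha, nth_In. lia.
    + apply IH; lia.
Qed.

Lemma ForallOrdPairs_app {A} (R0 : A -> A -> Prop) l1 l2 :
  ForallOrdPairs R0 l1 -> ForallOrdPairs R0 l2 ->
  (forall x y, In x l1 -> In y l2 -> R0 x y) -> ForallOrdPairs R0 (l1 ++ l2).
Proof.
  intros H1 H2 H12. induction H1 as [|a l Ha Hl IH]; simpl; auto.
  constructor.
  - apply Forall_app. split; auto. rewrite Forall_forall. intros y Hy. apply H12; simpl; auto.
  - apply IH. intros x y Hx Hy. apply H12; simpl; auto.
Qed.

Lemma ForallOrdPairs_flat_map {A} (R0 : A -> A -> Prop) (f : nat -> list A) len :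
  forall s,
  (forall i, (s <= i < s + len)%nat -> ForallOrdPairs R0 (f i)) ->
  (forall i j x y, (s <= i)%nat -> (i < j)%nat -> (j < s + len)%nat ->
     In x (f i) -> In y (f j) -> R0 x y) ->
  ForallOrdPairs R0 (flat_map f (seq s len)).
Proof.
  induction len as [|len IH]; intros s Hin Hout; simpl; [constructor|].
  apply ForallOrdPairs_app.
  - apply Hin; lia.
  - apply IH; intros; [apply Hin | apply (Hout i j)]; auto; lia.
  - intros x y Hx Hy. apply in_flat_map in Hy. destruct Hy as [j [Hj Hy]].
    apply in_seq in Hj. apply (Hout s j x y); auto; lia.
Qed.

Lemma is_dissection_of_unit_square_intro (D : list tri) :
  (forall T, In T D -> nondegenerate T) ->
  ForallOrdPairs separated D ->
  (forall T, In T D -> vertices_in_unit_square T) ->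
  (forall p, in_unit_square p -> exists T, In T D /\ in_triangle T p) ->
  is_dissection_of_unit_square D.
Proof.
  intros Hnd Hsep Hsq Hcov. split; [exact Hnd|split].
  - intros i j Hi Hj Hij p. apply separated_interiors_disjoint.
    apply ForallOrdPairs_nth; auto. exact separated_sym.
  - intros p. split; [exact (Hcov p)|].
    intros [T [HT Hp]]. exact (in_unit_square_triangle T p (Hsq T HT) Hp).
Qed.

Lemma fold_Rmax_le (l : list R) M :
  0 <= M -> (forall x, In x l -> x <= M) -> fold_right Rmax 0 l <= M.
Proof.
  induction l as [|a l IH]; simpl; intros H0 H; auto.
  apply Rmax_lub; auto.
Qed.

Lemma range_le (D : list tri) c e : 0 <= e ->
  (forall T, In T D -> Rabs (area T - c) <= e) -> range D <= 2 * e.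
Proof.
  intros He H. unfold range. apply fold_Rmax_le; [lra|].
  intros x Hx. apply in_map_iff in Hx. destruct Hx as [T1 [<- HT1]].
  apply fold_Rmax_le; [lra|].
  intros y Hy. apply in_map_iff in Hy. destruct Hy as [T2 [<- HT2]].
  pose proof (H T1 HT1) as H1. pose proof (H T2 HT2) as H2.
  replace (area T1 - area T2) with ((area T1 - c) + - (area T2 - c)) by ring.
  eapply Rle_trans; [apply Rabs_triang|]. rewrite Rabs_Ropp. lra.
Qed.

Lemma top_y_ge n x : 0 < INR n -> x <= 1 -> 1 - 2 / INR n <= top_y n x.
Proof.
  intros Hn Hx. unfold top_y, Rdiv.
  assert (0 < / INR n) by (apply Rinv_0_lt_compat; lra). nra.
Qed.

Lemma top_y_le_1 n x : 0 < INR n -> 0 <= x -> top_y n x <= 1.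
Proof.
  intros Hn Hx. unfold top_y, Rdiv.
  assert (0 < / INR n) by (apply Rinv_0_lt_compat; lra). nra.
Qed.

Lemma top_y_pos n x : 2 < INR n -> x <= 1 -> 0 < top_y n x.
Proof.
  intros Hn Hx. pose proof (top_y_ge n x ltac:(lra) Hx).
  assert (2 / INR n < 1); [|lra].
  apply (Rmult_lt_reg_r (INR n)); [lra|]. field_simplify; lra.
Qed.

Definition admissible_slice (a b m u : R) : Prop :=
  0 <= a /\ a < m < b /\ a < u < b /\ b <= 1.

Section Slice.
Variable n : nat.
Variables a b m u : R.
Hypothesis Hn : 2 < INR n.
Hypothesis Hadm : admissible_slice a b m u.

Local Notation h := (top_y n).
Local Notation A := ((a, 0) : point).
Local Notation B := ((b, 0) : point).
Local Notation Q := ((b, h b) : point).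
Local Notation S := ((a, h a) : point).
Local Notation M := ((m, 0) : point).
Local Notation U := ((u, h u) : point).

Ltac sarea_field := unfold sarea, signed_area, top_y, px, py; simpl; field; lra.

Lemma sarea_ASM : sarea A S M = - ((m - a) * h a) / 2.
Proof. sarea_field. Qed.
Lemma sarea_SMU : sarea S M U = (u - a) * h m / 2.
Proof. sarea_field. Qed.
Lemma sarea_MUQ : sarea M U Q = - ((b - u) * h m) / 2.
Proof. sarea_field. Qed.
Lemma sarea_MBQ : sarea M B Q = (b - m) * h b / 2.
Proof. sarea_field. Qed.

Lemma slice_heights_pos : 0 < h a /\ 0 < h b /\ 0 < h m /\ 0 < h u.
Proof.
  destruct Hadm as (Ha & Hm & Hu & Hb).
  repeat split; apply top_y_pos; lra.
Qed.

Lemma slice_nondegenerate T : In T (slice_triangles n a b m u) -> nondegenerate T.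
Proof.
  destruct Hadm as (Ha & Hm & Hu & Hb).
  destruct slice_heights_pos as (Hha & Hhb & Hhm & Hhu).
  unfold nondegenerate.
  intros [<-|[<-|[<-|[<-|[]]]]]; fold (sarea A S M) (sarea S M U) (sarea M U Q) (sarea M B Q).
  - rewrite sarea_ASM. nra.
  - rewrite sarea_SMU. nra.
  - rewrite sarea_MUQ. nra.
  - rewrite sarea_MBQ. nra.
Qed.

Ltac signs := auto; simpl; rewrite ?sarea_degen_l, ?sarea_degen_r; repeat split; lra.

(* [SM] separates ASM from the other three, [MU] separates SMU from MUQ, and [MQ]
   separates MBQ from SMU and MUQ. *)
Lemma slice_separated : ForallOrdPairs separated (slice_triangles n a b m u).
Proof.
  destruct Hadm as (Ha & Hm & Hu & Hb).
  destruct slice_heights_pos as (Hha & Hhb & Hhm & Hhu).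
  assert (SM_A : sarea S M A <= 0) by (rewrite sarea_cycle, sarea_cycle, sarea_ASM; nra).
  assert (SM_U : 0 <= sarea S M U) by (rewrite sarea_SMU; nra).
  assert (SM_Q : 0 <= sarea S M Q)
    by (replace (sarea S M Q) with ((b - a) * h m / 2) by sarea_field; nra).
  assert (SM_B : 0 <= sarea S M B)
    by (replace (sarea S M B) with ((b - m) * h a / 2) by sarea_field; nra).
  assert (MU_S : 0 <= sarea M U S)
    by (rewrite sarea_cycle, sarea_cycle, sarea_SMU; nra).
  assert (MU_Q : sarea M U Q <= 0) by (rewrite sarea_MUQ; nra).
  assert (MQ_S : 0 <= sarea M Q S)
    by (replace (sarea M Q S) with ((b - a) * h m / 2) by sarea_field; nra).
  assert (MQ_U : 0 <= sarea M Q U)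
    by (replace (sarea M Q U) with ((b - u) * h m / 2) by sarea_field; nra).
  assert (MQ_B : sarea M Q B <= 0)
    by (replace (sarea M Q B) with (- ((b - m) * h b) / 2) by sarea_field; nra).
  assert (HSM : S <> M) by (intro E; injection E; lra).
  assert (HMU : M <> U) by (intro E; injection E; lra).
  assert (HMQ : M <> Q) by (intro E; injection E; lra).
  repeat constructor.
  - apply (separated_by_line S M); signs.
  - apply (separated_by_line S M); signs.
  - apply (separated_by_line S M); signs.
  - apply separated_sym, (separated_by_line M U); signs.
  - apply separated_sym, (separated_by_line M Q); signs.
  - apply separated_sym, (separated_by_line M Q); signs.
Qed.

Lemma slice_in_unit_square T :
  In T (slice_triangles n a b m u) -> vertices_in_unit_square T.
Proof.
  destruct Hadm as (Ha & Hm & Hu & Hb).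
  destruct slice_heights_pos as (Hha & Hhb & Hhm & Hhu).
  pose proof (top_y_le_1 n a) as Ka; pose proof (top_y_le_1 n b) as Kb;
  pose proof (top_y_le_1 n m) as Km; pose proof (top_y_le_1 n u) as Ku.
  intros [<-|[<-|[<-|[<-|[]]]]]; unfold vertices_in_unit_square, in_unit_square;
    simpl; repeat split; lra.
Qed.

Lemma slice_between T :
  In T (slice_triangles n a b m u) -> all_vertices (fun p => a <= px p <= b) T.
Proof.
  destruct Hadm as (Ha & Hm & Hu & Hb).
  intros [<-|[<-|[<-|[<-|[]]]]]; simpl; lra.
Qed.

Lemma slice_below_top T :
  In T (slice_triangles n a b m u) -> all_vertices (fun p => affine (2 / INR n) 1 (-1) p <= 0) T.
Proof.
  destruct Hadm as (Ha & Hm & Hu & Hb).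
  assert (Hbot : forall x, 0 <= x <= 1 -> affine (2 / INR n) 1 (-1) (x, 0) <= 0).
  { intros x Hx. pose proof (top_y_pos n x Hn ltac:(lra)).
    unfold top_y in *. unfold affine, px, py; simpl. lra. }
  assert (Htop : forall x, affine (2 / INR n) 1 (-1) (x, h x) = 0).
  { intros x. unfold affine, top_y, px, py; simpl. field. lra. }
  intros [<-|[<-|[<-|[<-|[]]]]]; simpl; rewrite ?Htop; repeat split;
    first [lra | apply Hbot; lra].
Qed.

(* Locate [p] by its side of [SM], then of [MQ], then of [MU]. *)
Lemma slice_cover p : a <= px p <= b -> 0 <= py p <= h (px p) ->
  exists T, In T (slice_triangles n a b m u) /\ in_triangle T p.
Proof.
  destruct Hadm as (Ha & Hm & Hu & Hb).
  destruct slice_heights_pos as (Hha & Hhb & Hhm & Hhu).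
  destruct p as [x y]. unfold px, py; simpl. intros Hx Hy.
  destruct (Rle_lt_dec (sarea S M (x, y)) 0) as [C1|C1].
  { exists (A, S, M). split; [simpl; tauto|].
    apply in_triangle_neg.
    - rewrite sarea_ASM. nra.
    - rewrite sarea_cycle. exact C1.
    - unfold sarea, signed_area, px, py; simpl. nra.
    - unfold sarea, signed_area, px, py; simpl. nra. }
  destruct (Rle_lt_dec 0 (sarea M (x, y) Q)) as [C2|C2].
  { exists (M, B, Q). split; [simpl; tauto|].
    apply in_triangle_pos.
    - rewrite sarea_MBQ. nra.
    - unfold sarea, signed_area, px, py; simpl. nra.
    - exact C2.
    - unfold sarea, signed_area, px, py; simpl. nra. }
  destruct (Rle_lt_dec 0 (sarea M U (x, y))) as [C3|C3].
  { exists (S, M, U). split; [simpl; tauto|].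
    apply in_triangle_pos.
    - rewrite sarea_SMU. nra.
    - rewrite sarea_cycle. exact C3.
    - replace (sarea S (x, y) U) with ((u - a) * (h x - y) / 2) by sarea_field. nra.
    - lra. }
  exists (M, U, Q). split; [simpl; tauto|].
  apply in_triangle_neg.
  - rewrite sarea_MUQ. nra.
  - replace (sarea (x, y) U Q) with ((b - u) * (y - h x) / 2) by sarea_field. nra.
  - lra.
  - lra.
Qed.

End Slice.

(* [M] and [U] are placed so that [ASM] and then [SMU] have area exactly [1/n]. *)
Definition bottom_cut (n : nat) (a : R) : R := a + 2 / (INR n * top_y n a).
Definition top_cut (n : nat) (a : R) : R := a + 2 / (INR n * top_y n (bottom_cut n a)).

Definition slice_defect (n : nat) (a b : R) : R :=
  (b - a) ^ 3 / (2 * INR n ^ 2 * top_y n a).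

Lemma Rabs_abs_sub_le x c d : 0 <= c -> x = c + d \/ x = - (c + d) ->
  Rabs (Rabs x - c) <= Rabs d.
Proof.
  intros Hc [-> | ->].
  - pose proof (Rabs_triang_inv2 (c + d) c) as Htri.
    rewrite (Rabs_pos_eq c Hc) in Htri.
    replace (c + d - c) with d in Htri by ring. exact Htri.
  - pose proof (Rabs_triang_inv2 (- (c + d)) (- c)) as Htri.
    rewrite !Rabs_Ropp, (Rabs_pos_eq c Hc) in Htri.
    replace (- (c + d) - - c) with (- d) in Htri by ring.
    rewrite Rabs_Ropp in Htri. rewrite Rabs_Ropp. exact Htri.
Qed.

Section SliceArea.
Variable n : nat.
Variables a b : R.
Hypothesis Hn : 5 <= INR n.
Hypothesis Ha : 0 <= a.
Hypothesis Hab : a < b.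
Hypothesis Hb : b <= 1.
Hypothesis Htrapezoid : (b - a) * (1 - (a + b) / INR n) = 4 / INR n.

Local Notation N := (INR n).
Local Notation ha := (top_y n a).
Local Notation w := (b - a).

Lemma top_y_left_ge : 3 / 5 <= ha.
Proof.
  pose proof (top_y_ge n a ltac:(lra) ltac:(lra)).
  assert (2 / N <= 2 / 5) by (apply Rmult_le_compat_l; [lra|]; apply Rinv_le_contravar; lra).
  lra.
Qed.

Lemma slice_key : N * ha * w = 4 + w ^ 2.
Proof.
  replace 4 with ((b - a) * (1 - (a + b) / N) * N) by (rewrite Htrapezoid; field; lra).
  unfold top_y. field. lra.
Qed.

Lemma slice_width_le : w * N <= 20 / 3.
Proof.
  assert (Hsum : (a + b) / N <= 2 / 5).
  { apply (Rmult_le_reg_r N); [lra|]. field_simplify; lra. }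
  assert (w * (1 - (a + b) / N) * N = 4) by (rewrite Htrapezoid; field; lra).
  nra.
Qed.

Lemma top_y_bottom_cut : top_y n (bottom_cut n a) = ha - 4 / (N * N * ha).
Proof.
  pose proof top_y_left_ge. unfold bottom_cut, top_y in *. field. split; lra.
Qed.

Lemma bottom_cut_between : a < bottom_cut n a < b.
Proof.
  pose proof top_y_left_ge. pose proof slice_key.
  assert (HNH : 0 < N * ha) by nra.
  unfold bottom_cut. split.
  - assert (0 < 2 / (N * ha)) by (apply Rdiv_lt_0_compat; lra). lra.
  - assert (2 / (N * ha) < w); [|lra].
    apply (Rmult_lt_reg_l (N * ha)); [lra|]. field_simplify; nra.
Qed.

Lemma top_y_bottom_cut_pos : 0 < top_y n (bottom_cut n a).
Proof. pose proof bottom_cut_between. apply top_y_pos; lra. Qed.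

Lemma top_cut_between : a < top_cut n a < b.
Proof.
  pose proof top_y_left_ge. pose proof slice_width_le.
  pose proof top_y_bottom_cut_pos as Hhm.
  set (hm := top_y n (bottom_cut n a)) in *.
  assert (HNh : 0 < N * hm) by nra.
  assert (Hcorr : 4 * (w * N) / (N * N * ha) <= 16 / 9).
  { apply (Rmult_le_reg_r (N * N * ha)); [nra|].
    field_simplify; [|lra]. nra. }
  assert (Hkey : N * hm * w = 4 + w ^ 2 - 4 * (w * N) / (N * N * ha)).
  { unfold hm. rewrite top_y_bottom_cut, <- slice_key. field. split; lra. }
  unfold top_cut. fold hm. split.
  - assert (0 < 2 / (N * hm)) by (apply Rdiv_lt_0_compat; lra). lra.
  - assert (2 / (N * hm) < w); [|lra].
    apply (Rmult_lt_reg_l (N * hm)); [lra|]. field_simplify; nra.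
Qed.

Lemma slice_defect_bounds : 0 <= slice_defect n a b <= 250 / N ^ 5.
Proof.
  pose proof top_y_left_ge. pose proof slice_width_le.
  assert (HN5 : 0 < N ^ 5) by (apply pow_lt; lra).
  unfold slice_defect. split.
  - apply Rle_mult_inv_pos; [apply pow_le; lra | nra].
  - set (v := w * N).
    replace (w ^ 3 / (2 * N ^ 2 * ha)) with (v ^ 3 / (2 * ha) / N ^ 5) by (unfold v; field; lra).
    apply Rmult_le_compat_r; [apply Rlt_le, Rinv_0_lt_compat; lra|].
    apply (Rmult_le_reg_r (2 * ha)); [lra|]. field_simplify; [|lra].
    assert (v ^ 3 <= (20 / 3) ^ 3); [|nra].
    apply pow_incr. unfold v. split; [apply Rmult_le_pos|]; lra.
Qed.

Lemma top_y_left_eq : ha = (4 + w ^ 2) / (N * w).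
Proof. pose proof slice_key. field_simplify_eq; nra. Qed.

Lemma top_y_right_eq : top_y n b = ha - 2 * w / N.
Proof. unfold top_y. field. lra. Qed.

Local Notation m := (bottom_cut n a).
Local Notation u := (top_cut n a).

Lemma sarea_slice_T1 : sarea (a, 0) (a, ha) (m, 0) = - (1 / N).
Proof.
  pose proof top_y_left_ge.
  rewrite sarea_ASM by lra. unfold bottom_cut. field. lra.
Qed.

Lemma sarea_slice_T2 : sarea (a, ha) (m, 0) (u, top_y n u) = 1 / N.
Proof.
  pose proof top_y_bottom_cut_pos.
  rewrite sarea_SMU by lra. unfold top_cut. field. lra.
Qed.

(* Eliminating [top_y n a] through [slice_key] turns the remaining two areas into
   rational identities in [n] and the width [b - a]. *)
Lemma sarea_slice_T3 :
  sarea (m, 0) (u, top_y n u) (b, top_y n b) = - (1 / N + slice_defect n a b).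
Proof.
  pose proof top_y_bottom_cut_pos.
  rewrite sarea_MUQ by lra. unfold top_cut, slice_defect.
  rewrite top_y_bottom_cut, top_y_left_eq. field.
  assert (0 <= w ^ 2) by apply pow2_ge_0. repeat split; nra.
Qed.

Lemma sarea_slice_T4 : sarea (m, 0) (b, 0) (b, top_y n b) = 1 / N - slice_defect n a b.
Proof.
  rewrite sarea_MBQ by lra. unfold bottom_cut, slice_defect.
  rewrite top_y_right_eq, top_y_left_eq. field.
  assert (0 <= w ^ 2) by apply pow2_ge_0. repeat split; nra.
Qed.

Lemma slice_areas_close T : In T (slice_triangles n a b m u) ->
  Rabs (area T - 1 / N) <= 250 / N ^ 5.
Proof.
  pose proof slice_defect_bounds as Hdef.
  assert (0 <= 1 / N) by (apply Rlt_le, Rdiv_lt_0_compat; lra).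
  intros [<-|[<-|[<-|[<-|[]]]]]; unfold area;
    match goal with |- context [signed_area (?x, ?y, ?z)] =>
      change (signed_area (x, y, z)) with (sarea x y z) end.
  - rewrite sarea_slice_T1, (Rabs_abs_sub_le _ _ 0); [rewrite Rabs_R0|..]; lra.
  - rewrite sarea_slice_T2, (Rabs_abs_sub_le _ _ 0); [rewrite Rabs_R0|..]; lra.
  - rewrite sarea_slice_T3, (Rabs_abs_sub_le _ _ (slice_defect n a b));
      [rewrite Rabs_pos_eq|..]; lra.
  - rewrite sarea_slice_T4, (Rabs_abs_sub_le _ _ (- slice_defect n a b));
      [rewrite Rabs_Ropp, Rabs_pos_eq|..]; lra.
Qed.

End SliceArea.

Section TopTriangle.
Variable n : nat.
Hypothesis Hn : 2 < INR n.

Local Notation N := (INR n).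

Lemma sarea_top_triangle : sarea (0, 1) (1, 1) (1, 1 - 2 / N) = - (1 / N).
Proof. unfold sarea, signed_area, px, py; simpl. field. lra. Qed.

Lemma top_triangle_nondegenerate : nondegenerate (top_triangle n).
Proof.
  unfold nondegenerate, top_triangle. change (signed_area ((0, 1), (1, 1), (1, 1 - 2 / N))) with (sarea (0, 1) (1, 1) (1, 1 - 2 / N)).
  rewrite sarea_top_triangle. assert (0 < 1 / N) by (apply Rdiv_lt_0_compat; lra). lra.
Qed.

Lemma area_top_triangle : area (top_triangle n) = 1 / N.
Proof.
  unfold area, top_triangle. change (signed_area ((0, 1), (1, 1), (1, 1 - 2 / N))) with (sarea (0, 1) (1, 1) (1, 1 - 2 / N)).
  rewrite sarea_top_triangle, Rabs_Ropp. apply Rabs_pos_eq.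
  apply Rlt_le, Rdiv_lt_0_compat; lra.
Qed.

Lemma top_triangle_in_unit_square : vertices_in_unit_square (top_triangle n).
Proof.
  assert (0 < 2 / N < 1).
  { split; [apply Rdiv_lt_0_compat; lra|].
    apply (Rmult_lt_reg_r N); [lra|]. field_simplify; lra. }
  unfold vertices_in_unit_square, in_unit_square, top_triangle; simpl. repeat split; lra.
Qed.

Lemma top_triangle_above : all_vertices (fun p => 0 <= affine (2 / N) 1 (-1) p) (top_triangle n).
Proof.
  unfold top_triangle, affine, px, py; simpl.
  assert (0 < 2 / N) by (apply Rdiv_lt_0_compat; lra).
  repeat split; try lra; apply Req_le; field; lra.
Qed.

Lemma top_triangle_cover p : in_unit_square p -> top_y n (px p) <= py p ->
  in_triangle (top_triangle n) p.
Proof.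
  destruct p as [x y]. intros Hsq Hy.
  unfold in_unit_square, px, py in Hsq, Hy; simpl in Hsq, Hy.
  destruct Hsq as [[Hx0 Hx1] [Hy0 Hy1]].
  assert (0 < / N) by (apply Rinv_0_lt_compat; lra).
  apply in_triangle_neg.
  - rewrite sarea_top_triangle. assert (0 < 1 / N) by (apply Rdiv_lt_0_compat; lra). lra.
  - replace (sarea (x, y) (1, 1) (1, 1 - 2 / N)) with (- ((1 - x) * / N))
      by (unfold sarea, signed_area, px, py; simpl; field; lra).
    nra.
  - replace (sarea (0, 1) (x, y) (1, 1 - 2 / N)) with ((top_y n x - y) / 2)
      by (unfold sarea, signed_area, top_y, px, py; simpl; field; lra).
    lra.
  - replace (sarea (0, 1) (1, 1) (x, y)) with ((y - 1) / 2)
      by (unfold sarea, signed_area, px, py; simpl; field).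
    lra.
Qed.

End TopTriangle.

(* The area under the top segment over [[0, x]] is [x - x^2/n]; the breakpoint [i] is
   the root of [x - x^2/n = 4 i / n] in [[0, 1]], so every slice has area [4/n]. *)
Definition breakpoint (n i : nat) : R := (INR n - sqrt (INR n ^ 2 - 16 * INR i)) / 2.

Section Breakpoints.
Variables n k : nat.
Hypothesis Hnk : INR n = 4 * INR k + 1.
Hypothesis Hk : (1 <= k)%nat.

Lemma INR_n_ge_5 : 5 <= INR n.
Proof. apply le_INR in Hk. simpl in Hk. lra. Qed.

Lemma breakpoint_discriminant_nonneg i : (i <= k)%nat -> 0 <= INR n ^ 2 - 16 * INR i.
Proof.
  intros Hi. apply le_INR in Hi. rewrite Hnk.
  pose proof (pow2_ge_0 (4 * INR k - 1)). nra.
Qed.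

Lemma breakpoint_area i : (i <= k)%nat ->
  breakpoint n i - breakpoint n i ^ 2 / INR n = 4 * INR i / INR n.
Proof.
  intros Hi. pose proof INR_n_ge_5.
  unfold breakpoint. set (s := sqrt (INR n ^ 2 - 16 * INR i)).
  assert (Hs : s * s = INR n ^ 2 - 16 * INR i)
    by (apply sqrt_sqrt, breakpoint_discriminant_nonneg, Hi).
  replace (INR i) with ((INR n ^ 2 - s * s) / 16) by lra.
  field. lra.
Qed.

Lemma breakpoint_0 : breakpoint n 0 = 0.
Proof.
  pose proof INR_n_ge_5. unfold breakpoint. simpl INR.
  rewrite Rmult_0_r, Rminus_0_r, sqrt_pow2 by lra. lra.
Qed.

Lemma breakpoint_k : breakpoint n k = 1.
Proof.
  pose proof INR_n_ge_5. unfold breakpoint.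
  replace (INR n ^ 2 - 16 * INR k) with ((INR n - 2) ^ 2) by (rewrite Hnk; ring).
  rewrite sqrt_pow2 by lra. lra.
Qed.

Lemma breakpoint_le i j : (i <= j)%nat -> (j <= k)%nat -> breakpoint n i <= breakpoint n j.
Proof.
  intros Hij Hj. unfold breakpoint.
  pose proof (breakpoint_discriminant_nonneg j Hj). apply le_INR in Hij.
  assert (sqrt (INR n ^ 2 - 16 * INR j) <= sqrt (INR n ^ 2 - 16 * INR i))
    by (apply sqrt_le_1_alt; lra).
  lra.
Qed.

Lemma breakpoint_lt i : (1 <= i <= k)%nat -> breakpoint n (i - 1) < breakpoint n i.
Proof.
  intros Hi. unfold breakpoint.
  pose proof (breakpoint_discriminant_nonneg i ltac:(lia)).
  rewrite minus_INR by lia. simpl INR.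
  assert (sqrt (INR n ^ 2 - 16 * INR i) < sqrt (INR n ^ 2 - 16 * (INR i - 1)))
    by (apply sqrt_lt_1_alt; lra).
  lra.
Qed.

Lemma breakpoint_bounds i : (i <= k)%nat -> 0 <= breakpoint n i <= 1.
Proof.
  intros Hi. rewrite <- breakpoint_0, <- breakpoint_k. split; apply breakpoint_le; lia.
Qed.

Lemma breakpoint_trapezoid i : (1 <= i <= k)%nat ->
  (breakpoint n i - breakpoint n (i - 1)) *
    (1 - (breakpoint n (i - 1) + breakpoint n i) / INR n) = 4 / INR n.
Proof.
  intros Hi. pose proof INR_n_ge_5.
  pose proof (breakpoint_area i ltac:(lia)) as Hi_area.
  pose proof (breakpoint_area (i - 1) ltac:(lia)) as Hprev_area.
  rewrite minus_INR in Hprev_area by lia. simpl INR in Hprev_area.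
  transitivity ((breakpoint n i - breakpoint n i ^ 2 / INR n) -
                (breakpoint n (i - 1) - breakpoint n (i - 1) ^ 2 / INR n)).
  - field. lra.
  - rewrite Hi_area, Hprev_area. field. lra.
Qed.

End Breakpoints.

Definition slice (n i : nat) : list tri :=
  let a := breakpoint n (i - 1) in
  slice_triangles n a (breakpoint n i) (bottom_cut n a) (top_cut n a).

Definition dissection (n : nat) : list tri :=
  top_triangle n :: flat_map (slice n) (seq 1 ((n - 1) / 4)).

Lemma interval_of_partition (x : nat -> R) (t : R) k : (1 <= k)%nat ->
  x 0%nat <= t <= x k -> exists i, (1 <= i <= k)%nat /\ x (i - 1)%nat <= t <= x i.
Proof.
  induction k as [|k IH]; intros Hk Ht; [lia|].
  destruct (Nat.eq_dec k 0) as [->|Hk0]; [exists 1%nat; simpl; split; [lia|lra]|].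
  destruct (Rle_lt_dec t (x k)) as [Hle|Hgt].
  - destruct (IH ltac:(lia) ltac:(lra)) as [i [Hi Hti]]. exists i. split; [lia|exact Hti].
  - exists (S k). split; [lia|]. rewrite Nat.sub_succ, Nat.sub_0_r. lra.
Qed.

Section Dissection.
Variables n k : nat.
Hypothesis Hnk : n = (4 * k + 1)%nat.
Hypothesis Hk : (1 <= k)%nat.

Local Notation N := (INR n).

Lemma INR_n_eq : N = 4 * INR k + 1.
Proof. rewrite Hnk, plus_INR, mult_INR. simpl. lra. Qed.

Lemma N_ge_5 : 5 <= N.
Proof. exact (INR_n_ge_5 n k INR_n_eq Hk). Qed.

Lemma dissection_slice_count : ((n - 1) / 4)%nat = k.
Proof. rewrite Hnk. replace (4 * k + 1 - 1)%nat with (k * 4)%nat by lia. apply Nat.div_mul. lia. Qed.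

Lemma slice_admissible i : (1 <= i <= k)%nat ->
  admissible_slice (breakpoint n (i - 1)) (breakpoint n i)
    (bottom_cut n (breakpoint n (i - 1))) (top_cut n (breakpoint n (i - 1))).
Proof.
  intros Hi. pose proof N_ge_5.
  pose proof (breakpoint_bounds n k INR_n_eq Hk (i - 1) ltac:(lia)).
  pose proof (breakpoint_bounds n k INR_n_eq Hk i ltac:(lia)).
  pose proof (breakpoint_lt n k INR_n_eq Hk i Hi).
  pose proof (breakpoint_trapezoid n k INR_n_eq Hk i Hi).
  pose proof (bottom_cut_between n (breakpoint n (i - 1)) (breakpoint n i)).
  pose proof (top_cut_between n (breakpoint n (i - 1)) (breakpoint n i)).
  unfold admissible_slice. intuition lra.
Qed.

Lemma in_dissection_slices T : In T (flat_map (slice n) (seq 1 ((n - 1) / 4))) ->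
  exists i, (1 <= i <= k)%nat /\ In T (slice n i).
Proof.
  intros HT. apply in_flat_map in HT. destruct HT as [i [Hi HT]].
  rewrite dissection_slice_count, in_seq in Hi. exists i. split; [lia|exact HT].
Qed.

Lemma in_dissection T : In T (dissection n) ->
  T = top_triangle n \/ exists i, (1 <= i <= k)%nat /\ In T (slice n i).
Proof. intros [<-|HT]; [now left | right; exact (in_dissection_slices T HT)]. Qed.

Lemma dissection_length : length (dissection n) = n.
Proof.
  unfold dissection. rewrite dissection_slice_count. cbn [length].
  assert (Hlen : forall s len, length (flat_map (slice n) (seq s len)) = (4 * len)%nat).
  { intros s len. revert s. induction len as [|len IH]; intros s; simpl; [reflexivity|].
    rewrite IH. lia. }
  rewrite Hlen. lia.
Qed.

Lemma dissection_nondegenerate T : In T (dissection n) -> nondegenerate T.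
Proof.
  pose proof N_ge_5.
  intros HT. destruct (in_dissection T HT) as [-> | [i [Hi HTi]]].
  - apply top_triangle_nondegenerate. lra.
  - exact (slice_nondegenerate n _ _ _ _ ltac:(lra) (slice_admissible i Hi) T HTi).
Qed.

Lemma dissection_in_unit_square T : In T (dissection n) -> vertices_in_unit_square T.
Proof.
  pose proof N_ge_5.
  intros HT. destruct (in_dissection T HT) as [-> | [i [Hi HTi]]].
  - apply top_triangle_in_unit_square. lra.
  - exact (slice_in_unit_square n _ _ _ _ ltac:(lra) (slice_admissible i Hi) T HTi).
Qed.

(* The top triangle lies above the segment, and distinct slices are separated by the
   vertical line through a breakpoint. *)
Lemma dissection_separated : ForallOrdPairs separated (dissection n).
Proof.
  pose proof N_ge_5.
  constructor.
  - rewrite Forall_forall. intros T HT.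
    destruct (in_dissection_slices T HT) as [i [Hi HTi]].
    apply separated_sym. exists (2 / N), 1, (-1). split; [right; lra|]. split.
    + exact (slice_below_top n _ _ _ _ ltac:(lra) (slice_admissible i Hi) T HTi).
    + apply top_triangle_above. lra.
  - rewrite dissection_slice_count. apply ForallOrdPairs_flat_map.
    + intros i Hi. exact (slice_separated n _ _ _ _ ltac:(lra) (slice_admissible i ltac:(lia))).
    + intros i j T T' Hi Hij Hj HT HT'.
      pose proof (slice_between n _ _ _ _ (slice_admissible i ltac:(lia)) T HT) as Hx.
      pose proof (slice_between n _ _ _ _ (slice_admissible j ltac:(lia)) T' HT') as Hx'.
      pose proof (breakpoint_le n k INR_n_eq i (j - 1) ltac:(lia) ltac:(lia)).
      exists 1, 0, (- breakpoint n i). split; [left; lra|].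
      destruct T as [[p1 p2] p3], T' as [[q1 q2] q3]. simpl in Hx, Hx' |- *. unfold affine.
      repeat split; lra.
Qed.

Lemma dissection_cover p : in_unit_square p -> exists T, In T (dissection n) /\ in_triangle T p.
Proof.
  pose proof N_ge_5.
  intros Hp. destruct (Rle_lt_dec (top_y n (px p)) (py p)) as [Habove|Hbelow].
  - exists (top_triangle n). split; [now left|]. apply top_triangle_cover; auto; lra.
  - destruct Hp as [Hx Hy].
    rewrite <- (breakpoint_0 n k INR_n_eq Hk), <- (breakpoint_k n k INR_n_eq Hk) in Hx.
    destruct (interval_of_partition (breakpoint n) (px p) k Hk Hx) as [i [Hi Hxi]].
    destruct (slice_cover n _ _ _ _ ltac:(lra) (slice_admissible i Hi) p Hxi ltac:(lra))
      as [T [HT HTp]].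
    exists T. split; [|exact HTp].
    right. apply in_flat_map. exists i. split; [|exact HT].
    rewrite dissection_slice_count. apply in_seq. lia.
Qed.

Lemma dissection_areas_close T : In T (dissection n) -> Rabs (area T - 1 / N) <= 250 / N ^ 5.
Proof.
  pose proof N_ge_5. assert (0 < N ^ 5) by (apply pow_lt; lra).
  intros HT. destruct (in_dissection T HT) as [-> | [i [Hi HTi]]].
  - rewrite area_top_triangle by lra. unfold Rminus. rewrite Rplus_opp_r, Rabs_R0.
    apply Rle_mult_inv_pos; [lra|]. apply pow_lt; lra.
  - destruct (slice_admissible i Hi) as (Ha & Hm & Hu & Hb).
    pose proof (breakpoint_lt n k INR_n_eq Hk i Hi).
    exact (slice_areas_close n (breakpoint n (i - 1)) (breakpoint n i) ltac:(lra) Ha ltac:(lra) Hb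
             (breakpoint_trapezoid n k INR_n_eq Hk i Hi) T HTi).
Qed.

Lemma dissection_special_type : special_type n (dissection n).
Proof.
  exists (breakpoint n), (fun i => bottom_cut n (breakpoint n (i - 1))),
    (fun i => top_cut n (breakpoint n (i - 1))).
  rewrite dissection_slice_count.
  split; [exact (breakpoint_0 n k INR_n_eq Hk)|].
  split; [exact (breakpoint_k n k INR_n_eq Hk)|].
  split; [|rewrite <- dissection_slice_count; apply Permutation_refl].
  intros i Hi. destruct (slice_admissible i Hi) as (Ha & Hm & Hu & Hb).
  pose proof (breakpoint_lt n k INR_n_eq Hk i Hi). lra.
Qed.

End Dissection.

Lemma mod_4_eq_1 n : (n mod 4 = 1)%nat -> n = (4 * ((n - 1) / 4) + 1)%nat.
Proof.
  intros Hmod. pose proof (Nat.div_mod n 4 ltac:(lia)) as Hn. rewrite Hmod in Hn.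
  replace ((n - 1) / 4)%nat with (n / 4)%nat; [lia|].
  apply Nat.div_unique with 0%nat; lia.
Qed.

Theorem theorem7p2 :
  exists C : R, 0 < C /\
    forall n : nat, (5 <= n)%nat -> (n mod 4 = 1)%nat ->
      exists D : list tri,
        length D = n /\
        is_dissection_of_unit_square D /\
        range D <= C / (INR n ^ 5) /\
        special_type n D.
Proof.
  exists 500. split; [lra|]. intros n Hn5 Hmod.
  pose proof (mod_4_eq_1 n Hmod) as Hnk.
  remember ((n - 1) / 4)%nat as k eqn:Hk_def; clear Hk_def.
  assert (Hk : (1 <= k)%nat) by lia.
  exists (dissection n). split; [|split; [|split]].
  - exact (dissection_length n k Hnk Hk).
  - apply is_dissection_of_unit_square_intro.
    + exact (dissection_nondegenerate n k Hnk Hk).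
    + exact (dissection_separated n k Hnk Hk).
    + exact (dissection_in_unit_square n k Hnk Hk).
    + exact (dissection_cover n k Hnk Hk).
  - replace (500 / INR n ^ 5) with (2 * (250 / INR n ^ 5))
      by (pose proof (N_ge_5 n k Hnk Hk); field; lra).
    apply (range_le _ (1 / INR n)); [|exact (dissection_areas_close n k Hnk Hk)].
    pose proof (N_ge_5 n k Hnk Hk).
    apply Rle_mult_inv_pos; [lra | apply pow_lt; lra].
  - exact (dissection_special_type n k Hnk Hk).
Qed.
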